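(* Let $\Gamma$ be a finite connected $4$-valent graph whose automorphism group is transitive on $2$-arcs, and suppose the girth of $\Gamma$ is at most $4$. Then one of the following holds: (1) $\Gamma$ has girth $3$ and $\Gamma\cong K_5$; (2) $\Gamma$ has girth $4$ and $\Gamma\cong K_{4,4}\cong C(4,1)$; (3) $\Gamma$ has girth $4$ and $\Gamma$ is isomorphic to $K_{5,5}-5K_2$, to $Q_4$, or to $BCH$.
   Context: A $2$-arc is a sequence $(v_0,v_1,v_2)$ of vertices with $v_0\sim v_1\sim v_2$ and $v_0\ne v_2$. $K_{5,5}-5K_2$ is the complete bipartite graph $K_{5,5}$ with a perfect matching removed. $Q_4$ is the $4$-dimensional hypercube, i.e. the Cayley graph of $\mathbb{Z}_2^4$ with respect to the four standard basis vectors. $BCH$ (bipartite complement of the Heawood graph) has as vertices the $7$ points and $7$ lines of the Fano plane, a point $p$ being adjacent to a line $L$ iff $p\notin L$. $C(4,1)$ is the lexicographic product of a $4$-cycle with the edgeless graph on $2$ vertices. *)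

(* Simple graphs are symmetric irreflexive relations on a finType. *)
From mathcomp Require Import all_boot fingroup perm.
Set Implicit Arguments. Unset Strict Implicit. Unset Printing Implicit Defensive.

Section Graphs.
Variable T : finType.
Variable e : rel T.

Definition regular (k : nat) := forall x : T, #|[set y | e x y]| = k.

Definition gconnected := forall x y : T, connect e x y.

Definition is_aut (s : {perm T}) := forall x y, e (s x) (s y) = e x y.

Definition two_arc (a b c : T) := [/\ e a b, e b c & a != c].

Definition two_arc_transitive :=
  forall a b c a' b' c', two_arc a b c -> two_arc a' b' c' ->
    exists s : {perm T}, [/\ is_aut s, s a = a', s b = b' & s c = c'].

Definition has_cycle (k : nat) :=
  3 <= k /\ exists s : seq T, [/\ size s = k, uniq s & path.cycle e s].

Definition girth (g : nat) :=
  has_cycle g /\ forall k, k < g -> ~ has_cycle k.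
End Graphs.

Definition isomorphic (T T' : finType) (e : rel T) (e' : rel T') :=
  exists f : T -> T', bijective f /\ forall x y, e' (f x) (f y) = e x y.

Definition K5_rel : rel 'I_5 := fun x y => x != y.

Definition K44_rel : rel (bool * 'I_4) := fun x y => x.1 != y.1.

(* C(4,1) = C_4[2K_1]: lexicographic product of the 4-cycle with the empty graph on 2 vertices *)
Definition C41_rel : rel ('I_4 * 'I_2) :=
  fun x y => (y.1 == (x.1 + 1) %% 4 :> nat) || (x.1 == (y.1 + 1) %% 4 :> nat).

Definition K55m_rel : rel (bool * 'I_5) := fun x y => (x.1 != y.1) && (x.2 != y.2).

Definition Q4_rel : rel {ffun 'I_4 -> bool} :=
  fun x y => #|[set i | x i != y i]| == 1.

(* Fano plane: points 'I_7, lines 'I_7, line l = {l, l+1, l+3} mod 7 *)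
Definition fano_inc (p l : 'I_7) : bool := ((p + 7 - l) %% 7) \in [:: 0; 1; 3].

(* bipartite complement of the Heawood graph: (false,p) point, (true,l) line;
   p ~ l iff p is not on l *)
Definition BCH_rel : rel (bool * 'I_7) :=
  fun x y => (x.1 != y.1) &&
    ~~ (if x.1 then fano_inc y.2 x.2 else fano_inc x.2 y.2).

From mathcomp Require Import all_boot fingroup perm.
Set Implicit Arguments. Unset Strict Implicit. Unset Printing Implicit Defensive.

(* Let [c] be the number of common neighbours of the ends of a 2-arc; 2-arc transitivity
   makes it independent of the arc. A triangle [x1 x2 x3] is mapped onto any 2-arc [p q r],
   so [p ~ r]: neighbours of a vertex are pairwise adjacent and the graph is [K_5].
   In girth 4, a 4-cycle gives [c >= 2], and [c <= 4]. Fix [y] with neighbours [a i].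
   If [c = 4], all [a i] have the same neighbours: [K_{4,4}].
   If [c = 3], any three [a i] have a common neighbour besides [y], and no vertex other than
   [y] is adjacent to all four; this gives vertices [b k], and one more vertex adjacent to
   all [b k] closes up [K_{5,5} - 5K_2].
   If [c = 2], each pair [a i], [a j] has one more common neighbour [z i j]. A vertex [t] at
   distance 3 from [y] is adjacent to [z i j] for the edges [ij] of a triangle or of a
   4-cycle of [K_4] (counting common neighbours of [t] and [a i]); and such a vertex of one
   kind forces the far vertices of the same kind for the other triangles, resp. 4-cycles.
   Triangles give [Q_4], with the antipode of [y] as the sixteenth vertex; 4-cycles give the
   bipartite complement of the Heawood graph. In each case the labelled vertices span an
   injective homomorphism from the model graph, which is onto by connectivity. *)

(** * Model graphs *)

Notation "m '#' n" := (@Ordinal n m isT) (at level 2, format "m # n").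

Lemma isomorphic_trans (T1 T2 T3 : finType) (e1 : rel T1) (e2 : rel T2) (e3 : rel T3) :
  isomorphic e1 e2 -> isomorphic e2 e3 -> isomorphic e1 e3.
Proof.
move=> [f [bf Hf]] [g [bg Hg]]; exists (g \o f); split; first exact: bij_comp.
by move=> x y /=; rewrite Hg Hf.
Qed.

Lemma card_ord_pred n (P : pred nat) : #|[set x : 'I_n | P x]| = count P (iota 0 n).
Proof. by rewrite cardsE cardE size_filter -val_enum_ord count_map -enumT. Qed.

Lemma all_iota_pairsP (P : nat -> nat -> bool) n :
  all (fun i => all (P i) (iota 0 n)) (iota 0 n) -> forall i j, i < n -> j < n -> P i j.
Proof.
move=> /allP allP_ij i j ltin ltjn.
have iin : i \in iota 0 n by rewrite mem_iota.
by have /allP := allP_ij i iin; apply; rewrite mem_iota.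
Qed.

Definition adj_edges (E : seq (nat * nat)) (i j : nat) : bool :=
  ((i, j) \in E) || ((j, i) \in E).

Definition edge_rel n (E : seq (nat * nat)) : rel 'I_n := fun x y => adj_edges E x y.
Arguments edge_rel : clear implicits.

Lemma isomorphic_edge_rel n E (T : finType) (e : rel T) (d : T) (L : seq T) :
  #|T| = n -> size L = n -> uniq L ->
  all (fun i => all (fun j => e (nth d L i) (nth d L j) == adj_edges E i j) (iota 0 n))
      (iota 0 n) ->
  isomorphic (edge_rel n E) e.
Proof.
move=> cardT sizeL uniqL /all_iota_pairsP edgesE.
exists (fun x : 'I_n => nth d L x); split.
  apply: inj_card_bij; last by rewrite card_ord cardT.
  by move=> x y /eqP; rewrite nth_uniq ?sizeL // => /eqP /val_inj.
by move=> x y; apply/eqP/edgesE.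
Qed.

(* In [EK55m], [EQ4] and [EBCH] the vertices are numbered as in the labellings built in
   the girth-four analysis: [0] is a base vertex [y], [1]-[4] are its neighbours, followed by
   the vertices at distance two, three and four from [y]. *)
Definition EK5 := [:: (0, 1); (0, 2); (0, 3); (0, 4); (1, 2); (1, 3); (1, 4); (2, 3); (2, 4);
  (3, 4)].
Definition EK44 := [:: (0, 4); (0, 5); (0, 6); (0, 7); (1, 4); (1, 5); (1, 6); (1, 7); (2, 4);
  (2, 5); (2, 6); (2, 7); (3, 4); (3, 5); (3, 6); (3, 7)].
Definition EK55m := [:: (0, 1); (0, 2); (0, 3); (0, 4); (1, 6); (1, 7); (1, 8); (2, 5);
  (2, 7); (2, 8); (3, 5); (3, 6); (3, 8); (4, 5); (4, 6); (4, 7); (5, 9); (6, 9); (7, 9);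
  (8, 9)].
Definition EQ4 := [:: (0, 1); (0, 2); (0, 3); (0, 4); (1, 5); (2, 5); (1, 6); (3, 6); (1, 7);
  (4, 7); (2, 8); (3, 8); (2, 9); (4, 9); (3, 10); (4, 10); (8, 11); (9, 11); (10, 11);
  (11, 15); (6, 12); (7, 12); (10, 12); (12, 15); (5, 13); (7, 13); (9, 13); (13, 15);
  (5, 14); (6, 14); (8, 14); (14, 15)].
Definition EBCH := [:: (0, 1); (0, 2); (0, 3); (0, 4); (1, 5); (2, 5); (1, 6); (3, 6); (1, 7);
  (4, 7); (2, 8); (3, 8); (2, 9); (4, 9); (3, 10); (4, 10); (6, 11); (7, 11); (8, 11);
  (9, 11); (5, 12); (7, 12); (8, 12); (10, 12); (5, 13); (6, 13); (9, 13); (10, 13)].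

Lemma edge_rel_K5 : isomorphic (edge_rel 5 EK5) K5_rel.
Proof.
apply: (@isomorphic_edge_rel _ _ _ _ (0#5) [:: 0#5; 1#5; 2#5; 3#5; 4#5]);
  by rewrite ?card_ord //; vm_compute.
Qed.

Lemma edge_rel_K44 : isomorphic (edge_rel 8 EK44) K44_rel.
Proof.
apply: (@isomorphic_edge_rel _ _ _ _ (false, 0#4) [:: (false, 0#4); (false, 1#4);
  (false, 2#4); (false, 3#4); (true, 0#4); (true, 1#4); (true, 2#4); (true, 3#4)]);
  by rewrite ?card_prod ?card_bool ?card_ord //; vm_compute.
Qed.

Lemma edge_rel_C41 : isomorphic (edge_rel 8 EK44) C41_rel.
Proof.
apply: (@isomorphic_edge_rel _ _ _ _ (0#4, 0#2) [:: (0#4, 0#2); (0#4, 1#2); (2#4, 0#2);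
  (2#4, 1#2); (1#4, 0#2); (1#4, 1#2); (3#4, 0#2); (3#4, 1#2)]);
  by rewrite ?card_prod ?card_ord //; vm_compute.
Qed.

Lemma edge_rel_K55m : isomorphic (edge_rel 10 EK55m) K55m_rel.
Proof.
apply: (@isomorphic_edge_rel _ _ _ _ (false, 0#5) [:: (false, 0#5); (true, 1#5); (true, 2#5);
  (true, 3#5); (true, 4#5); (false, 1#5); (false, 2#5); (false, 3#5); (false, 4#5);
  (true, 0#5)]);
  by rewrite ?card_prod ?card_bool ?card_ord //; vm_compute.
Qed.

Lemma edge_rel_BCH : isomorphic (edge_rel 14 EBCH) BCH_rel.
Proof.
apply: (@isomorphic_edge_rel _ _ _ _ (false, 0#7) [:: (false, 0#7); (true, 1#7); (true, 2#7);
  (true, 3#7); (true, 5#7); (false, 6#7); (false, 5#7); (false, 3#7); (false, 1#7);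
  (false, 4#7); (false, 2#7); (true, 6#7); (true, 4#7); (true, 0#7)]);
  by rewrite ?card_prod ?card_bool ?card_ord //; vm_compute.
Qed.

(* Evaluating finite functions by [vm_compute] is slow, so [Q4_rel] is transported to
   binary expansions of natural numbers before computing. *)
Definition bits (m : nat) : {ffun 'I_4 -> bool} := [ffun i : 'I_4 => odd (m %/ 2 ^ i)].

Definition bit_diff (m p : nat) : pred nat := fun i => odd (m %/ 2 ^ i) != odd (p %/ 2 ^ i).

Lemma Q4_rel_bits m p : Q4_rel (bits m) (bits p) = (count (bit_diff m p) (iota 0 4) == 1).
Proof.
rewrite /Q4_rel -card_ord_pred.
by congr (_ == 1); apply: eq_card => i; rewrite !inE !ffunE.
Qed.

Lemma bits_inj_lt16 : {in gtn 16 &, injective bits}.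
Proof.
have bitsE : all (fun m => all (fun p => (m == p) || has (bit_diff m p) (iota 0 4))
  (iota 0 16)) (iota 0 16) by vm_compute.
move=> m p ltm ltp /ffunP bitsE'; apply/eqP.
have /orP[//|/hasP[i]] := all_iota_pairsP bitsE ltm ltp.
rewrite mem_iota => /andP[_ lti]; have := bitsE' (Ordinal lti).
by rewrite !ffunE /bit_diff => ->; rewrite eqxx.
Qed.

Definition Q4codes := [:: 0; 1; 2; 4; 8; 3; 5; 9; 6; 10; 12; 14; 13; 11; 7; 15].

Lemma edge_rel_Q4 : isomorphic (edge_rel 16 EQ4) Q4_rel.
Proof.
apply: (@isomorphic_edge_rel _ _ _ _ (bits 0) (map bits Q4codes)) => //.
- by rewrite card_ffun card_bool card_ord.
- by rewrite map_inj_in_uniq //; apply: sub_in2 bits_inj_lt16; apply/allP.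
apply/allP => i; rewrite mem_iota => ltni; apply/allP => j; rewrite mem_iota => ltnj.
rewrite !(nth_map 0) // Q4_rel_bits; move: i j ltni ltnj; apply: all_iota_pairsP.
by vm_compute.
Qed.

(** * Regular graphs and 2-arc transitivity *)

Section SimpleGraph.
Variables (T : finType) (e : rel T).
Hypotheses (e_sym : symmetric e) (e_irr : irreflexive e).

Local Notation N x := [set y | e x y].

Lemma adj_neq x y : e x y -> x != y.
Proof. by apply: contraTneq => ->; rewrite e_irr. Qed.

Section Regular.
Variable k : nat.
Hypothesis e_reg : regular e k.

Lemma mem_nbrs_uniq x (s : seq T) t : uniq s -> size s = k -> {subset s <= N x} ->
  e x t -> t \in s.
Proof.
move=> uniq_s size_s sub_s xt.
have -> : s =i N x.
  apply/subset_cardP; last exact/subsetP.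
  by rewrite e_reg (card_uniqP uniq_s).
by rewrite inE.
Qed.

Lemma exists_nbr_notin x (s : seq T) : size s < k -> exists2 t, e x t & t \notin s.
Proof.
move=> size_s; have : ~~ (N x \subset s).
  apply: contraTN size_s => /subset_leq_card; rewrite e_reg -leqNgt => le_k_s.
  exact: leq_trans le_k_s (card_size s).
by case/subsetPn => t; rewrite inE; exists t.
Qed.

Lemma nbr_labelling x : exists a : 'I_k -> T,
  [/\ injective a, forall i, e x (a i) & forall t, e x t -> exists i, t = a i].
Proof.
have cardN : #|N x| = k := e_reg x.
exists (fun i => enum_val (cast_ord (esym cardN) i)); split.
- by move=> i j /enum_val_inj /cast_ord_inj.
- by move=> i; have := enum_valP (cast_ord (esym cardN) i); rewrite inE.
move=> t xt; have tN : t \in N x by rewrite inE.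
by exists (cast_ord cardN (enum_rank_in tN t)); rewrite cast_ordK enum_rankK_in.
Qed.

Hypothesis e_conn : gconnected e.

(* By equal valency, the image of [f] contains all neighbours of its vertices; hence it is
   everything by connectivity. *)
Lemma isomorphic_of_inj_hom (H : finType) (h : rel H) (x0 : H) (f : H -> T) :
  regular h k -> {homo f : x y / h x y >-> e x y} -> injective f -> isomorphic e h.
Proof.
move=> h_reg f_hom f_inj.
have imN x : f @: [set x' | h x x'] = N (f x).
  apply/eqP; rewrite eqEcard card_imset // h_reg e_reg leqnn andbT.
  by apply/subsetP => t /imsetP[x']; rewrite inE => /f_hom ? ->; rewrite inE.
have f_surj t : exists x, f x = t.
  have /connectP[p] := e_conn (f x0) t.
  elim: p x0 => [|v p IHp] x /=; first by move=> _ ->; exists x.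
  case/andP => xv pv lt; have : v \in N (f x) by rewrite inE.
  by rewrite -imN => /imsetP[x' _ vE]; apply: (IHp x'); rewrite -vE.
pose g t := odflt x0 [pick x | f x == t].
have fK t : f (g t) = t.
  rewrite /g; case: pickP => [x /eqP // | none].
  by case: (f_surj t) => x fx; move: (none x); rewrite fx eqxx.
exists g; split; first by exists f => [t | x]; rewrite ?fK //; apply: f_inj; rewrite fK.
move=> t t'; rewrite -[t in RHS]fK -[t' in RHS]fK.
have : (f (g t') \in N (f (g t))) = e (f (g t)) (f (g t')) by rewrite inE.
by rewrite -imN mem_imset // inE => <-.
Qed.

Lemma isomorphic_edge_rel_of_labelling n E (d : T) (L : seq T) :
  all (fun i => count (adj_edges E i) (iota 0 n.+1) == k) (iota 0 n.+1) ->
  size L = n.+1 -> uniq L -> all (fun p => e (nth d L p.1) (nth d L p.2)) E ->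
  isomorphic e (edge_rel n.+1 E).
Proof.
move=> /allP regE size_L uniq_L /allP edgesL.
apply: (@isomorphic_of_inj_hom _ _ ord0 (fun x : 'I_n.+1 => nth d L x)).
- move=> x; rewrite card_ord_pred; apply/eqP/regE.
  by rewrite mem_iota add0n ltn_ord.
- by move=> x y /orP[] /edgesL //=; rewrite e_sym.
- by move=> x y /eqP; rewrite nth_uniq ?size_L // => /eqP /val_inj.
Qed.

End Regular.
End SimpleGraph.

Section TwoArcTransitive.
Variables (T : finType) (e : rel T).
Hypotheses (e_sym : symmetric e) (e_irr : irreflexive e) (e_2at : two_arc_transitive e).

Local Notation N x := [set y | e x y].

Lemma aut_nbrs (s : {perm T}) x : is_aut e s -> N (s x) = s @: N x.
Proof.
move=> s_aut; apply/setP => t; rewrite inE -(permKV s t) s_aut mem_imset ?inE //.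
exact: perm_inj.
Qed.

Lemma card_common_nbrs_two_arc x u z x' u' z' : two_arc e x u z -> two_arc e x' u' z' ->
  #|N x' :&: N z'| = #|N x :&: N z|.
Proof.
move=> xuz xuz'; have [s [s_aut <- _ <-]] := e_2at xuz xuz'.
rewrite !aut_nbrs // -imsetI ?card_imset //; first exact: perm_inj.
by move=> ? ? _ _; apply: perm_inj.
Qed.

Lemma two_arc_adj_of_triangle x1 x2 x3 : e x1 x2 -> e x2 x3 -> e x3 x1 ->
  forall p q r, two_arc e p q r -> e p r.
Proof.
move=> e12 e23 e31 p q r pqr.
have x123 : two_arc e x1 x2 x3 by split; rewrite // eq_sym; apply: adj_neq.
by have [s [s_aut <- _ <-]] := e_2at x123 pqr; rewrite s_aut e_sym.
Qed.

Lemma K5_of_triangle x1 x2 x3 : gconnected e -> regular e 4 ->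
  e x1 x2 -> e x2 x3 -> e x3 x1 -> isomorphic e (edge_rel 5 EK5).
Proof.
move=> e_conn e_reg e12 e23 e31.
have [a [a_inj a_adj _]] := nbr_labelling e_reg x1.
have a_adj2 i j : i != j -> e (a i) (a j).
  move=> ij; apply: (two_arc_adj_of_triangle e12 e23 e31 (q := x1)).
  by split; rewrite ?(inj_eq a_inj) // e_sym.
apply: (@isomorphic_edge_rel_of_labelling _ _ e_sym _ e_reg e_conn 4 EK5 x1
  [:: x1; a (0#4); a (1#4); a (2#4); a (3#4)]) => //.
- by rewrite /= !inE !(inj_eq a_inj) !(negbTE (adj_neq e_irr (a_adj _))).
- by rewrite /= !a_adj !a_adj2.
Qed.

End TwoArcTransitive.

(** * Girth four *)

Lemma uniq4E (T : eqType) (i j k l : T) :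
  uniq [:: i; j; k; l] = [&& i != j, i != k, i != l & [&& j != k, j != l & k != l]].
Proof. by rewrite /= !inE !negb_or !andbT -!andbA. Qed.

Lemma ord4_cases (P : 'I_4 -> Prop) : P (0#4) -> P (1#4) -> P (2#4) -> P (3#4) -> forall i, P i.
Proof.
by move=> P0 P1 P2 P3 [[|[|[|[|//]]]] lti];
  [move: P0 | move: P1 | move: P2 | move: P3]; congr P; apply: val_inj.
Qed.

Lemma mem_uniq4 (i j k l : 'I_4) : uniq [:: i; j; k; l] ->
  forall n, [|| n == i, n == j, n == k | n == l].
Proof.
move=> uniq_ijkl n; apply/negPn/negP => n_out.
have uniq5 : uniq [:: n; i; j; k; l] by rewrite cons_uniq uniq_ijkl andbT !inE.
by have := max_card (mem [:: n; i; j; k; l]); rewrite card_ord (card_uniqP uniq5).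
Qed.

Lemma ord4_complement (k : 'I_4) : exists i j l, uniq [:: i; j; l; k].
Proof.
by move: k; apply: ord4_cases;
  [exists (1#4), (2#4), (3#4) | exists (0#4), (2#4), (3#4) | exists (0#4), (1#4), (3#4)
  | exists (0#4), (1#4), (2#4)].
Qed.

Fact z_key : unit. Proof. exact: tt. Qed.

Section GirthFour.
Variables (T : finType) (e : rel T).
Hypotheses (e_sym : symmetric e) (e_irr : irreflexive e) (e_reg : regular e 4)
  (e_conn : gconnected e).
Hypothesis e_tri_free : forall x u z, e x u -> e u z -> e x z = false.

Local Notation N x := [set y | e x y].

Variable c : nat.
Hypothesis card_common : forall x u z, two_arc e x u z -> #|N x :&: N z| = c.

Lemma size_common_le x u z s : two_arc e x u z -> uniq s ->
  (forall v, v \in s -> e x v && e z v) -> size s <= c.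
Proof.
move=> xuz uniq_s s_common; rewrite -(card_common xuz) -(card_uniqP uniq_s).
by apply/subset_leq_card/subsetP => v /s_common /andP[? ?]; rewrite !inE; apply/andP.
Qed.

Lemma exists_common_notin x u z s : two_arc e x u z -> size s < c ->
  exists v, [/\ v \notin s, e x v & e z v].
Proof.
move=> xuz size_s; have : ~~ (N x :&: N z \subset s).
  apply: contraTN size_s => /subset_leq_card; rewrite (card_common xuz) -leqNgt => le_c_s.
  exact: leq_trans le_c_s (card_size s).
by case/subsetPn => v; rewrite !inE => /andP[? ?] ?; exists v.
Qed.

Variables (y : T) (a : 'I_4 -> T).
Hypotheses (a_inj : injective a) (a_adj : forall i, e y (a i)).

Lemma two_arc_a i j : i != j -> two_arc e (a i) y (a j).
Proof. by move=> ij; split; rewrite ?(inj_eq a_inj) // e_sym. Qed.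

Lemma y_neq_a i : y != a i. Proof. by have := adj_neq e_irr (a_adj i). Qed.

Section CommonFour.
Hypothesis c4 : c = 4.

Lemma nbrs_a_eq i j : N (a i) = N (a j).
Proof.
have [-> // | ij] := eqVneq i j.
have card_ij := card_common (two_arc_a ij); rewrite c4 in card_ij.
have /eqP <- : N (a i) :&: N (a j) == N (a i) by rewrite eqEcard subsetIl card_ij e_reg.
by apply/eqP; rewrite eqEcard subsetIr card_ij e_reg.
Qed.

Lemma K44_of_c4 : isomorphic e (edge_rel 8 EK44).
Proof.
have [b [b_inj b_adj _]] := nbr_labelling e_reg (a (0#4)).
have a_adj_b i k : e (a i) (b k).
  have : b k \in N (a (0#4)) by rewrite inE.
  by rewrite -(nbrs_a_eq i) inE.
have a_neq_b i k : a i != b k := adj_neq e_irr (a_adj_b i k).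
apply: (@isomorphic_edge_rel_of_labelling _ _ e_sym _ e_reg e_conn 7 EK44 y
  [:: a (0#4); a (1#4); a (2#4); a (3#4); b (0#4); b (1#4); b (2#4); b (3#4)]) => //.
- by rewrite /= !inE !(inj_eq a_inj) !(inj_eq b_inj) !(negbTE (a_neq_b _ _)).
- by rewrite /= !a_adj_b.
Qed.

End CommonFour.

Section CommonThree.
Hypothesis c3 : c = 3.
Hypothesis a_onto : forall t, e y t -> exists i, t = a i.

Lemma common_three i j l : uniq [:: i; j; l] ->
  exists t, [/\ t != y, e (a i) t, e (a j) t & e (a l) t].
Proof.
rewrite /= !inE negb_or andbT => /andP[/andP[ij il] jl].
have card_X := card_common (two_arc_a ij); have card_Y := card_common (two_arc_a il).
rewrite c3 in card_X card_Y.
set X := N (a i) :&: N (a j) in card_X *; set Y := N (a i) :&: N (a l) in card_Y *.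
have : #|X :|: Y| <= 4 by rewrite -(e_reg (a i)); apply/subset_leq_card; rewrite subUset !subsetIl.
rewrite cardsU card_X card_Y => le_XY.
have /card_gt1P[u [v [uXY vXY uv]]] : 1 < #|X :&: Y| by move: le_XY; case: #|X :&: Y| => [|[|]].
have [t tXY ty] : exists2 t, t \in X :&: Y & t != y.
  by case: (eqVneq u y) => [uy | uy]; [exists v; rewrite // -uy eq_sym | exists u].
by exists t; move: tXY; rewrite !inE => /andP[/andP[-> ->] /andP[_ ->]].
Qed.

(* [y] and any other common neighbour of all the [a i] would have four common neighbours. *)
Lemma no_common_four t : t != y -> ~ (forall i, e (a i) t).
Proof.
move=> ty t_adj.
have ta0y : two_arc e t (a (0#4)) y by split; rewrite // e_sym.
have uniq_a : uniq [:: a (0#4); a (1#4); a (2#4); a (3#4)] by rewrite /= !inE !(inj_eq a_inj).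
suff : size [:: a (0#4); a (1#4); a (2#4); a (3#4)] <= c by rewrite c3.
apply: size_common_le ta0y uniq_a _.
by move=> v; rewrite !inE => /or4P[] /eqP ->; rewrite e_sym t_adj a_adj.
Qed.

(* [b k] will be the vertex of [K_{5,5} - 5K_2] matched with [a k]. *)
Definition b k := odflt y [pick t | (t != y) && [forall i, (i != k) ==> e (a i) t]].

Lemma b_spec k : b k != y /\ forall i, i != k -> e (a i) (b k).
Proof.
rewrite /b; case: pickP => [t /andP[ty /forallP t_adj] | none].
  by split=> // i ik; apply: (implyP (t_adj i)).
have [i [j [l uniq_ijlk]]] := ord4_complement k.
have [t [ty ait ajt alt]] : exists t, [/\ t != y, e (a i) t, e (a j) t & e (a l) t].
  exact/common_three/(take_uniq 3 uniq_ijlk).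
have /negP[] := none t; rewrite ty /=; apply/forallP => m; apply/implyP.
by case/or4P: (mem_uniq4 uniq_ijlk m) => /eqP -> //; rewrite eqxx.
Qed.

Lemma b_neq_y k : b k != y. Proof. exact: (b_spec k).1. Qed.

Lemma adj_ab i k : i != k -> e (a i) (b k). Proof. exact: (b_spec k).2. Qed.

Lemma adj_ab_diag k : e (a k) (b k) = false.
Proof.
apply/negP => akbk; apply: (no_common_four (b_neq_y k)) => i.
by have [-> // | ik] := eqVneq i k; apply: adj_ab.
Qed.

Lemma b_inj : injective b.
Proof.
move=> k m bkm; apply/eqP/negP => /negP km.
apply: (no_common_four (b_neq_y k)) => i.
by have [-> | ik] := eqVneq i k; [rewrite bkm; apply: adj_ab | apply: adj_ab].
Qed.

Lemma adj_yb k : e y (b k) = false.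
Proof.
have [i [j [l]]] := ord4_complement k; rewrite uniq4E => /and4P[_ _ ik _].
exact: e_tri_free (a_adj i) (adj_ab ik).
Qed.

Lemma nbr_a_c3 i t : e (a i) t -> t = y \/ exists m, t = b m.
Proof.
have [j [l [n uniq_jlni]]] := ord4_complement i.
move: (uniq_jlni); rewrite uniq4E => /and4P[jl jn ji /and3P[ln li ni]].
move=> ait; suff : t \in [:: y; b j; b l; b n].
  by rewrite !inE => /or4P[] /eqP ->; [left | right; eexists ..].
apply: (mem_nbrs_uniq e_reg (x := a i)) => //.
  by rewrite uniq4E !(inj_eq b_inj) !(eq_sym y) !b_neq_y jl jn ln.
by move=> v; rewrite !inE => /or4P[] /eqP ->; [rewrite e_sym | apply: adj_ab; rewrite eq_sym ..].
Qed.

Section FourthNeighbour.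
Variable w : T.
Hypotheses (b0w : e (b (0#4)) w) (w_notin : w \notin [:: a (1#4); a (2#4); a (3#4)]).

Lemma adj_yw : e y w = false.
Proof.
apply/negP => /a_onto[m wE]; move: w_notin b0w; rewrite wE !inE !(inj_eq a_inj).
by move: m {wE}; apply: ord4_cases; rewrite //= e_sym adj_ab_diag.
Qed.

(* The 2-arc [a i, b 0, w] has three common neighbours: [b 0], [b j] and necessarily [b k]. *)
Lemma adj_wb_of i j k : uniq [:: 0#4; i; j; k] -> e w (b k).
Proof.
move=> uniq_0ijk; move: (uniq_0ijk); rewrite uniq4E => /and4P[i0 _ _ _].
have ai_b0 : e (a i) (b (0#4)) by apply: adj_ab; rewrite eq_sym.
have ai_neq_w : a i != w by apply: contraTneq (a_adj i) => ->; rewrite adj_yw.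
have [v [v_notin aiv wv]] : exists v, [/\ v \notin [:: b (0#4); b j], e (a i) v & e w v].
  by apply: exists_common_notin (And3 ai_b0 b0w ai_neq_w) _; rewrite c3.
have [vy | [m vE]] := nbr_a_c3 aiv; first by move: wv; rewrite vy e_sym adj_yw.
move: v_notin aiv wv; rewrite vE !inE !(inj_eq b_inj) => /norP[m0 mj] aibm.
have mi : m != i by apply: contraTneq aibm => ->; rewrite adj_ab_diag.
by case/or4P: (mem_uniq4 uniq_0ijk m) => /eqP mE; rewrite mE ?eqxx in m0 mi mj *.
Qed.

Lemma adj_wb k : e w (b k).
Proof.
move: k; apply: ord4_cases; first by rewrite e_sym.
- exact: (@adj_wb_of (2#4) (3#4)).
- exact: (@adj_wb_of (1#4) (3#4)).
- exact: (@adj_wb_of (1#4) (2#4)).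
Qed.

Lemma K55m_labelling : isomorphic e (edge_rel 10 EK55m).
Proof.
have neq_y u v : e y u -> e y v = false -> u != v.
  by move=> yu yv; apply: contraTneq yu => ->; rewrite yv.
have y_neq_w : y != w by apply: contraTneq (adj_wb (0#4)) => <-; rewrite adj_yb.
have b_neq_w k : b k != w by rewrite eq_sym (adj_neq e_irr (adj_wb k)).
apply: (@isomorphic_edge_rel_of_labelling _ _ e_sym _ e_reg e_conn 9 EK55m y
  [:: y; a (0#4); a (1#4); a (2#4); a (3#4); b (0#4); b (1#4); b (2#4); b (3#4); w]) => //.
- rewrite /= !inE !negb_or !(inj_eq a_inj) !(inj_eq b_inj); repeat (apply/andP; split);
    solve [ by [] | exact: y_neq_a | exact: y_neq_w | exact: neq_y (adj_yb _) | exact: neq_y adj_yw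
          | by rewrite eq_sym b_neq_y | exact: b_neq_w ].
- by rewrite /= !a_adj !adj_ab // !(e_sym _ w) !adj_wb.
Qed.

End FourthNeighbour.

Lemma K55m_of_c3 : isomorphic e (edge_rel 10 EK55m).
Proof.
have [w b0w w_notin] := exists_nbr_notin e_reg (b (0#4)) (s := [:: a (1#4); a (2#4); a (3#4)]) isT.
exact: K55m_labelling b0w w_notin.
Qed.

End CommonThree.

Section CommonTwo.
Hypothesis c2 : c = 2.
Hypothesis a_onto : forall t, e y t -> exists i, t = a i.

(* For [i != j], the common neighbour of [a i] and [a j] other than [y]. It is locked, as
   unfolding the [pick] during unification is prohibitively slow. *)
Definition z i j :=
  locked_with z_key (odflt y [pick t | (t != y) && [forall m in [set i; j], e (a m) t]]).

Lemma zC i j : z i j = z j i.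
Proof. by rewrite /z !unlock -setUC. Qed.

Lemma z_spec i j : i != j -> [/\ z i j != y, e (a i) (z i j) & e (a j) (z i j)].
Proof.
move=> ij; rewrite /z unlock; case: pickP => [t /andP[ty /forall_inP t_adj] | none].
  by split=> //; apply: t_adj; rewrite !inE eqxx ?orbT.
have [v [vy aiv ajv]] : exists v, [/\ v \notin [:: y], e (a i) v & e (a j) v].
  by apply: exists_common_notin (two_arc_a ij) _; rewrite c2.
have /negP[] := none v; rewrite inE in vy; rewrite vy /=.
by apply/forall_inP => m; rewrite !inE => /orP[] /eqP ->.
Qed.

Lemma z_neq_y i j : i != j -> z i j != y. Proof. by case/z_spec. Qed.
Lemma adj_az_l i j : i != j -> e (a i) (z i j). Proof. by case/z_spec. Qed.
Lemma adj_az_r i j : i != j -> e (a j) (z i j). Proof. by case/z_spec. Qed.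

Lemma z_unique i j t : i != j -> t != y -> e (a i) t -> e (a j) t -> t = z i j.
Proof.
move=> ij ty ait ajt; apply/eqP/negP => /negP tz.
have uniq_ytz : uniq [:: y; t; z i j].
  by rewrite /= !inE negb_or !(eq_sym y) ty (z_neq_y ij) tz.
suff : size [:: y; t; z i j] <= c by rewrite c2.
apply: size_common_le (two_arc_a ij) uniq_ytz _ => v.
by rewrite !inE => /or3P[] /eqP ->;
  [rewrite !(e_sym (a _)) !a_adj | rewrite ait ajt | rewrite (adj_az_l ij) (adj_az_r ij)].
Qed.

Lemma adj_yz i j : i != j -> e y (z i j) = false.
Proof. by move=> ij; apply: e_tri_free (a_adj i) (adj_az_l ij). Qed.

Lemma nbr_a_c2 i t : e (a i) t -> t != y -> exists2 m, m != i & t = z i m.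
Proof.
move=> ait ty; have tai_y : two_arc e t (a i) y by split; rewrite // e_sym.
have [v [v_notin tv yv]] : exists v, [/\ v \notin [:: a i], e t v & e y v].
  by apply: exists_common_notin tai_y _; rewrite c2.
have [m vE] := a_onto yv; rewrite vE inE (inj_eq a_inj) in v_notin.
exists m => //; apply: z_unique => //; first by rewrite eq_sym.
by rewrite -vE e_sym.
Qed.

Lemma adj_azE m i j : i != j -> e (a m) (z i j) = (m \in [:: i; j]).
Proof.
move=> ij; apply/idP/idP; last first.
  by rewrite !inE => /orP[] /eqP->; [apply: adj_az_l | apply: adj_az_r].
move=> amz; rewrite !inE; apply/negPn/negP; rewrite negb_or => /andP[mi mj].
have uniq_a : uniq [:: a i; a j; a m].
  by rewrite /= !inE !negb_or !(inj_eq a_inj) ij ![_ == m]eq_sym mi mj.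
suff : size [:: a i; a j; a m] <= c by rewrite c2.
have zaiy : two_arc e (z i j) (a i) y.
  by split; [rewrite e_sym; apply: adj_az_l | rewrite e_sym | apply: z_neq_y].
apply: size_common_le zaiy uniq_a _ => v.
by rewrite !inE => /or3P[] /eqP ->; rewrite a_adj andbT e_sym;
  [apply: adj_az_l | apply: adj_az_r | ].
Qed.

Lemma z_neq i j k l : i != j -> k != l -> (k \notin [:: i; j]) || (l \notin [:: i; j]) ->
  z i j != z k l.
Proof.
move=> ij kl k_or_l_out; apply/eqP => zE.
have ak := adj_az_l kl; have al := adj_az_r kl; rewrite -zE in ak al.
by move: k_or_l_out => /orP[] /negP[]; rewrite -(adj_azE _ ij).
Qed.

(* A far vertex is one not adjacent to [y]; the far neighbours of the [z i j] are the
   vertices at distance three from [y]. *)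
Lemma a_neq_far m t : ~~ e y t -> a m != t.
Proof. by move=> yt; apply: contraNneq yt => <-. Qed.

Lemma nbr_z_neq_y i j t : i != j -> e t (z i j) -> y != t.
Proof. by move=> ij tz; apply: contraTneq tz => <-; rewrite adj_yz. Qed.

(* The 2-arc [a i, z i j, t] has a second common neighbour, a neighbour [z i n] of [a i]. *)
Lemma far_adj_z_next i j m m' t : uniq [:: i; j; m; m'] -> ~~ e y t -> e (z i j) t ->
  e t (z i m) || e t (z i m').
Proof.
move=> uniq_ijmm' yt zt; move: (uniq_ijmm'); rewrite uniq4E => /and4P[ij _ _ _].
have arc : two_arc e (a i) (z i j) t by split; [apply: adj_az_l | | apply: a_neq_far].
have [v [v_notin aiv tv]] : exists v, [/\ v \notin [:: z i j], e (a i) v & e t v].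
  by apply: exists_common_notin arc _; rewrite c2.
have vy : v != y by apply: contraNneq yt => <-; rewrite e_sym.
have [n ni vE] := nbr_a_c2 aiv vy.
have nj : n != j by apply: contraNneq v_notin => nj; rewrite vE nj inE.
by case/or4P: (mem_uniq4 uniq_ijmm' n) => /eqP nE;
  [rewrite nE eqxx in ni | rewrite nE eqxx in nj | rewrite -nE -vE tv | rewrite -nE -vE tv orbT].
Qed.

Lemma far_adj_z3_false i j m m' t : uniq [:: i; j; m; m'] -> ~~ e y t ->
  e t (z i j) -> e t (z i m) -> e t (z i m') -> False.
Proof.
move=> uniq_ijmm' yt tj tm tm'; move: uniq_ijmm'; rewrite uniq4E.
case/and4P=> ij im im' /and3P[jm jm' mm'].
have z_ne n n' : i != n -> i != n' -> n != n' -> z i n != z i n'.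
  by move=> i_n i_n' nn'; apply: z_neq; rewrite // !inE !negb_or ![n' == _]eq_sym i_n' nn' orbT.
have uniq_z : uniq [:: z i j; z i m; z i m'] by rewrite /= !inE !negb_or !z_ne.
suff : size [:: z i j; z i m; z i m'] <= c by rewrite c2.
have arc : two_arc e (a i) (z i j) t.
  by split; [apply: adj_az_l | rewrite e_sym | apply: a_neq_far].
apply: size_common_le arc uniq_z _ => v.
by rewrite !inE => /or3P[] /eqP ->; rewrite ?adj_az_l ?tj ?tm ?tm'.
Qed.

Lemma adj_zz_shared s i j k l : i != j -> k != l -> s \in [:: i; j] -> s \in [:: k; l] ->
  e (z i j) (z k l) = false.
Proof. by move=> ij kl; rewrite -(adj_azE _ ij) -(adj_azE _ kl) e_sym; apply: e_tri_free. Qed.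

Lemma adj_zz i j k l : i != j -> k != l -> e (z i j) (z k l) = false.
Proof.
move=> ij kl; have [ki | k_out] := boolP (k \in [:: i; j]).
  by apply: adj_zz_shared ki _; rewrite ?inE ?eqxx.
have [li | l_out] := boolP (l \in [:: i; j]).
  by apply: adj_zz_shared li _; rewrite ?inE ?eqxx ?orbT.
have uniq_ijkl : uniq [:: i; j; k; l].
  move: k_out l_out; rewrite uniq4E !inE !negb_or ij kl ![_ == k]eq_sym ![_ == l]eq_sym.
  by move=> /andP[-> ->] /andP[-> ->].
move: (uniq_ijkl); rewrite uniq4E => /and4P[_ ik il _].
apply/negP => zz; have := far_adj_z_next uniq_ijkl (negbT (adj_yz kl)) zz.
by rewrite (@adj_zz_shared k) ?(@adj_zz_shared l) // !inE eqxx ?orbT.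
Qed.

Lemma far_of_nbr_z i j t : i != j -> e (z i j) t -> t \notin [:: a i; a j] -> ~~ e y t.
Proof.
move=> ij zt; apply: contra => /a_onto[m tE].
by move: zt; rewrite tE e_sym (adj_azE _ ij) !inE !(inj_eq a_inj).
Qed.

Lemma far_of_nbr_far i j t u : i != j -> ~~ e y t -> e (z i j) t -> e t u -> ~~ e y u.
Proof.
move=> ij yt zt tu; apply/negP => /a_onto[m uE].
have amt : e (a m) t by rewrite e_sym -uE.
have ty : t != y by rewrite eq_sym (nbr_z_neq_y ij) // e_sym.
have [n nm tE] := nbr_a_c2 amt ty.
by move: zt; rewrite tE adj_zz // eq_sym.
Qed.

Lemma exists_far_nbr_z i j s : i != j -> size s < 2 ->
  exists t, [/\ t \notin s, ~~ e y t & e (z i j) t].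
Proof.
move=> ij size_s.
have [t zt] := exists_nbr_notin e_reg (z i j) (s := [:: a i, a j & s]) size_s.
rewrite -[_ :: _]/([:: a i; a j] ++ s) mem_cat negb_or => /andP[t_out ts].
by exists t; split=> //; apply: far_of_nbr_z zt t_out.
Qed.

Lemma mem_far_nbrs_z i j t t' r : i != j -> t != t' -> ~~ e y t -> ~~ e y t' -> ~~ e y r ->
  e (z i j) t -> e (z i j) t' -> e (z i j) r -> r \in [:: t; t'].
Proof.
move=> ij tt' yt yt' yr zt zt' zr.
have : r \in [:: a i; a j; t; t'].
  apply: mem_nbrs_uniq zr => //.
    by rewrite uniq4E (inj_eq a_inj) ij !a_neq_far.
  by move=> v; rewrite !inE => /or4P[] /eqP ->; rewrite // e_sym;
    [apply: adj_az_l | apply: adj_az_r].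
rewrite !inE => /or4P[] /eqP rE; rewrite ?rE ?eqxx ?orbT //.
all: by move: yr; rewrite rE a_adj.
Qed.

Lemma far_adj_z_idx i j k n t : uniq [:: i; j; k] -> n != i -> ~~ e y t ->
  e t (z i j) -> e t (z i k) -> e t (z i n) -> n \in [:: j; k].
Proof.
move=> uniq_ijk ni yt tj tk tn; apply/negPn/negP; rewrite !inE negb_or => /andP[nj nk].
apply: (far_adj_z3_false (_ : uniq [:: i; j; k; n]) yt tj tk tn).
move: uniq_ijk; rewrite uniq4E /= !inE !negb_or andbT => /andP[/andP[-> ->] ->].
by rewrite (eq_sym i) (eq_sym j) (eq_sym k) ni nj nk.
Qed.

(* Every far neighbour [r] of [z i l] is then [t] or [t'], so [r] has three neighbours
   [z i _]. *)
Lemma far_pair_false i j k l t t' : uniq [:: i; j; k; l] -> t != t' -> ~~ e y t -> ~~ e y t' ->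
  e t (z i j) -> e t (z i k) -> e t' (z i j) -> e t' (z i k) -> False.
Proof.
move=> uniq_ijkl tt' yt yt' tj tk t'j t'k.
move: (uniq_ijkl); rewrite uniq4E => /and4P[ij ik il /and3P[jk jl kl]].
have [r [_ yr zr]] := exists_far_nbr_z (s := [::]) il isT.
have uniq_iljk : uniq [:: i; l; j; k] by rewrite uniq4E il ij ik !(eq_sym l) jl kl jk.
have r_in : r \in [:: t; t'].
  case/orP: (far_adj_z_next uniq_iljk yr zr) => rz;
    [apply: (mem_far_nbrs_z ij) | apply: (mem_far_nbrs_z ik)]; by rewrite // e_sym.
have [rj rk] : e r (z i j) /\ e r (z i k) by move: r_in; rewrite !inE => /orP[] /eqP->.
by apply: far_adj_z3_false uniq_ijkl yr rj rk _; rewrite e_sym.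
Qed.

Lemma far_triangle_next i j k l t : uniq [:: i; j; k; l] -> ~~ e y t ->
  e t (z i j) -> e t (z i k) -> e t (z j k) ->
  exists t', [/\ ~~ e y t', e t' (z i j), e t' (z i l) & e t' (z j l)].
Proof.
move=> uniq_ijkl yt tij tik tjk.
move: (uniq_ijkl); rewrite uniq4E => /and4P[ij ik il /and3P[jk jl kl]].
have uniq_jikl : uniq [:: j; i; k; l] by rewrite uniq4E eq_sym ij jk jl ik il kl.
have [t' [t'_notin yt' zt']] := exists_far_nbr_z (s := [:: t]) ij isT.
rewrite inE in t'_notin; have t'ij : e t' (z i j) by rewrite e_sym.
case/orP: (far_adj_z_next uniq_ijkl yt' zt') => [t'ik | t'il].
  by case: (far_pair_false uniq_ijkl t'_notin yt' yt t'ij t'ik tij tik).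
rewrite (zC i j) in zt' t'ij tij.
case/orP: (far_adj_z_next uniq_jikl yt' zt') => [t'jk | t'jl].
  by case: (far_pair_false uniq_jikl t'_notin yt' yt t'ij t'jk tij tjk).
by exists t'; rewrite (zC i j).
Qed.

Lemma far_square_next i j k l t : uniq [:: i; j; k; l] -> ~~ e y t ->
  e t (z i j) -> e t (z j k) -> e t (z k l) -> e t (z l i) ->
  exists t', [/\ ~~ e y t', e t' (z i j), e t' (z j l), e t' (z l k) & e t' (z k i)].
Proof.
move=> uniq_ijkl yt tij tjk tkl tli.
move: (uniq_ijkl); rewrite uniq4E => /and4P[ij ik il /and3P[jk jl kl]].
have uniq_ijlk : uniq [:: i; j; l; k] by rewrite uniq4E ij il ik jl jk (eq_sym l).
have uniq_jikl : uniq [:: j; i; k; l] by rewrite uniq4E eq_sym ij jk jl ik il kl.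
have uniq_kijl : uniq [:: k; i; j; l].
  by rewrite uniq4E (eq_sym k i) (eq_sym k j) ik jk kl ij il jl.
have tji : e t (z j i) by rewrite zC.
have til : e t (z i l) by rewrite zC.
have [t' [t'_notin yt' zt']] := exists_far_nbr_z (s := [:: t]) ij isT.
rewrite inE in t'_notin; have t'ij : e t' (z i j) by rewrite e_sym.
case/orP: (far_adj_z_next uniq_ijkl yt' zt') => [t'ik | t'il]; last first.
  by case: (far_pair_false uniq_ijlk t'_notin yt' yt t'ij t'il tij til).
have t'ji : e t' (z j i) by rewrite zC.
have zt'ji : e (z j i) t' by rewrite e_sym.
case/orP: (far_adj_z_next uniq_jikl yt' zt'ji) => [t'jk | t'jl].
  by case: (far_pair_false uniq_jikl t'_notin yt' yt t'ji t'jk tji tjk).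
have zt'ki : e (z k i) t' by rewrite zC e_sym.
case/orP: (far_adj_z_next uniq_kijl yt' zt'ki) => [t'kj | t'kl].
  by rewrite zC in t'kj; case: (far_adj_z3_false uniq_jikl yt' t'ji t'kj t'jl).
by exists t'; split; rewrite // zC.
Qed.

(* The 2-arc [z i j, t, u] has a second common neighbour; it cannot be an [a m] (then [u]
   would be some [z m n] next to [t]), so it is the other far neighbour [t'] of [z i j]. *)
Lemma far_triangle_adj_nbr i j k t t' u : uniq [:: i; j; k] -> ~~ e y t -> ~~ e y t' ->
  t != t' -> e t (z i j) -> e t (z i k) -> e t (z j k) -> e t' (z i j) -> e t u ->
  u \notin [:: z i j; z i k; z j k] -> e t' u.
Proof.
move=> uniq_ijk yt yt' tt' tij tik tjk t'ij tu.
rewrite !inE !negb_or => /and3P[u_ij u_ik u_jk].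
move: (uniq_ijk); rewrite /= !inE !negb_or andbT => /andP[/andP[ij ik] jk].
have arc : two_arc e (z i j) t u by split; rewrite // 1?e_sym // eq_sym.
have [v [vt zv uv]] : exists v, [/\ v \notin [:: t], e (z i j) v & e u v].
  by apply: exists_common_notin arc _; rewrite c2.
have [yv | far_v] := boolP (e y v); last first.
  rewrite inE in vt; have zt : e (z i j) t by rewrite e_sym.
  have zt' : e (z i j) t' by rewrite e_sym.
  have := mem_far_nbrs_z ij tt' yt yt' far_v zt zt' zv.
  by rewrite !inE (negbTE vt) /= => /eqP <-; rewrite e_sym.
have [m vE] := a_onto yv.
have uy : u != y by apply: contraNneq yt => <-; rewrite e_sym.
have amu : e (a m) u by rewrite e_sym -vE.
have [n nm uE] := nbr_a_c2 amu uy.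
move: zv; rewrite vE e_sym (adj_azE _ ij) !inE => /orP[] /eqP mE; subst m.
- have t_n : e t (z i n) by rewrite -uE.
  have := far_adj_z_idx uniq_ijk nm yt tij tik t_n.
  by rewrite !inE => /orP[] /eqP nE; [move: u_ij | move: u_ik]; rewrite uE nE eqxx.
- have t_n : e t (z j n) by rewrite -uE.
  have tji : e t (z j i) by rewrite zC.
  have uniq_jik : uniq [:: j; i; k] by rewrite /= !inE !negb_or eq_sym ij jk ik.
  have := far_adj_z_idx uniq_jik nm yt tji tjk t_n.
  by rewrite !inE => /orP[] /eqP nE; [move: u_ij; rewrite zC | move: u_jk]; rewrite uE nE eqxx.
Qed.

Lemma a_neq_z m i j : i != j -> a m != z i j.
Proof. by move=> ij; apply: contraTneq (a_adj m) => ->; rewrite adj_yz. Qed.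

Lemma z_neq_nbr_z i j k l t : i != j -> k != l -> e t (z k l) -> z i j != t.
Proof. by move=> ij kl tz; apply: contraTneq tz => <-; rewrite adj_zz. Qed.

Lemma far_neq i j k l t t' : uniq [:: i; j; k; l] -> ~~ e y t ->
  e t (z i j) -> e t (z i k) -> e t' (z i l) -> t != t'.
Proof.
move=> uniq_ijkl yt tj tk; apply: contraTneq => <-.
by apply/negP/(far_adj_z3_false uniq_ijkl yt tj tk).
Qed.

Ltac distinct_vertices := match goal with
  | |- is_true (a _ != a _) => by rewrite (inj_eq a_inj)
  | |- is_true (y != a _) => exact: y_neq_a
  | |- is_true (y != z _ _) => by rewrite eq_sym z_neq_y
  | |- is_true (y != _) => by apply: nbr_z_neq_y; last eassumption
  | |- is_true (a _ != z _ _) => exact: a_neq_z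
  | |- is_true (a _ != _) => exact: a_neq_far
  | |- is_true (z _ _ != z _ _) => exact: z_neq
  | |- is_true (z _ _ != _) => by apply: z_neq_nbr_z; last eassumption
  | |- _ => first [ done | by rewrite eq_sym | exact: adj_neq e_irr _ _ _ ]
  end.

Ltac labelled_edge := first
  [ done | exact: a_adj | by rewrite adj_azE | by rewrite e_sym ].

Local Notation z01 := (z (0#4) (1#4)).
Local Notation z02 := (z (0#4) (2#4)).
Local Notation z03 := (z (0#4) (3#4)).
Local Notation z12 := (z (1#4) (2#4)).
Local Notation z13 := (z (1#4) (3#4)).
Local Notation z23 := (z (2#4) (3#4)).

Section Cube.
Variables w0 w1 w2 w3 u : T.
Hypotheses (y_w0 : ~~ e y w0) (y_w1 : ~~ e y w1) (y_w2 : ~~ e y w2) (y_w3 : ~~ e y w3).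
Hypotheses (w3_01 : e w3 z01) (w3_02 : e w3 z02) (w3_12 : e w3 z12).
Hypotheses (w2_01 : e w2 z01) (w2_03 : e w2 z03) (w2_13 : e w2 z13).
Hypotheses (w1_02 : e w1 z02) (w1_03 : e w1 z03) (w1_23 : e w1 z23).
Hypotheses (w0_12 : e w0 z12) (w0_13 : e w0 z13) (w0_23 : e w0 z23).
Hypotheses (w3u : e w3 u) (u_notin : u \notin [:: z01; z02; z12]).

Lemma Q4_labelling : isomorphic e (edge_rel 16 EQ4).
Proof.
have y_u : ~~ e y u by apply: (@far_of_nbr_far (0#4) (1#4) w3) => //; rewrite e_sym.
have y_neq_u : y != u by apply: contraNneq y_w3 => ->; rewrite e_sym.
have w3_neq_w2 : w3 != w2 by apply: (@far_neq (0#4) (1#4) (2#4) (3#4)).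
have w3_neq_w1 : w3 != w1 by apply: (@far_neq (0#4) (1#4) (2#4) (3#4)).
have w3_neq_w0 : w3 != w0 by apply: (@far_neq (1#4) (0#4) (2#4) (3#4)); rewrite // zC.
have w2_neq_w1 : w2 != w1 by apply: (@far_neq (0#4) (1#4) (3#4) (2#4)).
have w2_neq_w0 : w2 != w0 by apply: (@far_neq (1#4) (0#4) (3#4) (2#4)); rewrite // zC.
have w1_neq_w0 : w1 != w0 by apply: (@far_neq (2#4) (0#4) (3#4) (1#4)); rewrite // zC.
move: u_notin; rewrite !inE !negb_or => /and3P[u_01 u_02 u_12].
have w2u : e w2 u.
  by apply: (@far_triangle_adj_nbr (0#4) (1#4) (2#4) w3); rewrite // !inE !negb_or u_01 u_02.
have w1u : e w1 u.
  apply: (@far_triangle_adj_nbr (0#4) (2#4) (1#4) w3); rewrite // ?(zC (2#4)) //.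
  by rewrite !inE !negb_or u_01 u_02.
have w0u : e w0 u.
  apply: (@far_triangle_adj_nbr (1#4) (2#4) (0#4) w3); rewrite // ?(zC _ (0#4)) //.
  by rewrite !inE !negb_or u_01 u_02 u_12.
have u_03 : u != z03.
  by apply: contraTneq w3u => ->; apply/negP/(@far_adj_z3_false (0#4) (1#4) (2#4) (3#4)).
have u_13 : u != z13.
  apply: contraTneq w3u => ->.
  by apply/negP/(@far_adj_z3_false (1#4) (0#4) (2#4) (3#4)); rewrite // zC.
have u_23 : u != z23.
  apply: contraTneq w3u => ->.
  by apply/negP/(@far_adj_z3_false (2#4) (0#4) (1#4) (3#4)); rewrite // zC.
apply: (@isomorphic_edge_rel_of_labelling _ _ e_sym _ e_reg e_conn 15 EQ4 y
  [:: y; a (0#4); a (1#4); a (2#4); a (3#4); z01; z02; z03; z12; z13; z23; w0; w1; w2; w3; u]).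
- by vm_compute.
- by [].
- rewrite /= !inE !negb_or; repeat (apply/andP; split); distinct_vertices.
- rewrite /=; repeat (apply/andP; split); labelled_edge.
Qed.

End Cube.

Lemma Q4_of_triangle t : ~~ e y t -> e t z01 -> e t z02 -> e t z12 ->
  isomorphic e (edge_rel 16 EQ4).
Proof.
move=> yt t01 t02 t12.
have t10 : e t (z (1#4) (0#4)) by rewrite zC.
have t20 : e t (z (2#4) (0#4)) by rewrite zC.
have t21 : e t (z (2#4) (1#4)) by rewrite zC.
have [w2 [y_w2 w2_01 w2_03 w2_13]] :=
  @far_triangle_next (0#4) (1#4) (2#4) (3#4) t isT yt t01 t02 t12.
have [w1 [y_w1 w1_02 w1_03 w1_23]] :=
  @far_triangle_next (0#4) (2#4) (1#4) (3#4) t isT yt t02 t01 t21.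
have [w0 [y_w0 w0_12 w0_13 w0_23]] :=
  @far_triangle_next (1#4) (2#4) (0#4) (3#4) t isT yt t12 t10 t20.
have [u tu u_notin] := exists_nbr_notin e_reg t (s := [:: z01; z02; z12]) isT.
by apply: (@Q4_labelling w0 w1 w2 t u).
Qed.

Section HeawoodComplement.
Variables v1 v2 v3 : T.
Hypotheses (y_v1 : ~~ e y v1) (y_v2 : ~~ e y v2) (y_v3 : ~~ e y v3).
Hypotheses (v1_01 : e v1 z01) (v1_12 : e v1 z12) (v1_23 : e v1 z23) (v1_03 : e v1 z03).
Hypotheses (v2_01 : e v2 z01) (v2_13 : e v2 z13) (v2_23 : e v2 z23) (v2_02 : e v2 z02).
Hypotheses (v3_02 : e v3 z02) (v3_12 : e v3 z12) (v3_13 : e v3 z13) (v3_03 : e v3 z03).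

Lemma BCH_labelling : isomorphic e (edge_rel 14 EBCH).
Proof.
have v1_neq_v2 : v1 != v2 by apply: (@far_neq (0#4) (1#4) (3#4) (2#4)).
have v1_neq_v3 : v1 != v3 by apply: (@far_neq (0#4) (1#4) (3#4) (2#4)).
have v2_neq_v3 : v2 != v3 by apply: (@far_neq (0#4) (1#4) (2#4) (3#4)).
apply: (@isomorphic_edge_rel_of_labelling _ _ e_sym _ e_reg e_conn 13 EBCH y
  [:: y; a (0#4); a (1#4); a (2#4); a (3#4); z01; z02; z03; z12; z13; z23; v3; v1; v2]).
- by vm_compute.
- by [].
- rewrite /= !inE !negb_or; repeat (apply/andP; split); distinct_vertices.
- rewrite /=; repeat (apply/andP; split); labelled_edge.
Qed.

End HeawoodComplement.

Lemma BCH_of_square t : ~~ e y t -> e t z01 -> e t z12 -> e t z23 -> e t z03 ->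
  isomorphic e (edge_rel 14 EBCH).
Proof.
move=> yt t01 t12 t23 t03.
have t30 : e t (z (3#4) (0#4)) by rewrite zC.
have t32 : e t (z (3#4) (2#4)) by rewrite zC.
have t21 : e t (z (2#4) (1#4)) by rewrite zC.
have t10 : e t (z (1#4) (0#4)) by rewrite zC.
have [v2 [y_v2 v2_01 v2_13 v2_32 v2_20]] :=
  @far_square_next (0#4) (1#4) (2#4) (3#4) t isT yt t01 t12 t23 t30.
have [v3 [y_v3 v3_03 v3_31 v3_12 v3_20]] :=
  @far_square_next (0#4) (3#4) (2#4) (1#4) t isT yt t03 t32 t21 t10.
apply: (@BCH_labelling t v2 v3) => //; by rewrite zC.
Qed.

(* A far neighbour [p] of [z01] is adjacent to the [z i j] for the edges [ij] of a triangle or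
   of a 4-cycle of [K_4]. *)
Lemma Q4_or_BCH_of_c2 : isomorphic e (edge_rel 16 EQ4) \/ isomorphic e (edge_rel 14 EBCH).
Proof.
have [p [_ yp zp]] := exists_far_nbr_z (s := [::]) (isT : 0#4 != 1#4) isT.
have p01 : e p z01 by rewrite e_sym.
have zp10 : e (z (1#4) (0#4)) p by rewrite zC.
have p10 : e p (z (1#4) (0#4)) by rewrite zC.
case/orP: (@far_adj_z_next (0#4) (1#4) (2#4) (3#4) p isT yp zp) => [p02 | p03];
  case/orP: (@far_adj_z_next (1#4) (0#4) (2#4) (3#4) p isT yp zp10) => [p12 | p13].
- by left; apply: (Q4_of_triangle yp).
- right; have zp20 : e (z (2#4) (0#4)) p by rewrite zC e_sym.
  case/orP: (@far_adj_z_next (2#4) (0#4) (1#4) (3#4) p isT yp zp20) => [p21 | p23].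
    by rewrite zC in p21; case: (@far_adj_z3_false (1#4) (0#4) (2#4) (3#4) p isT yp p10 p21 p13).
  have p32 : e p (z (3#4) (2#4)) by rewrite zC.
  have p20 : e p (z (2#4) (0#4)) by rewrite zC.
  have [v [y_v v01 v12 v23 v30]] :=
    @far_square_next (0#4) (1#4) (3#4) (2#4) p isT yp p01 p13 p32 p20.
  by apply: (BCH_of_square y_v); rewrite // zC.
- right; have zp30 : e (z (3#4) (0#4)) p by rewrite zC e_sym.
  case/orP: (@far_adj_z_next (3#4) (0#4) (1#4) (2#4) p isT yp zp30) => [p31 | p32].
    by rewrite zC in p31; case: (@far_adj_z3_false (1#4) (0#4) (2#4) (3#4) p isT yp p10 p12 p31).
  by apply: (BCH_of_square yp); rewrite // zC.
- left; have [t [yt t01 t02 t12]] :=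
    @far_triangle_next (0#4) (1#4) (3#4) (2#4) p isT yp p01 p03 p13.
  exact: (Q4_of_triangle yt).
Qed.

End CommonTwo.
End GirthFour.

(** * Girth and the classification *)

Section Cycles.
Variables (T : finType) (e : rel T).
Hypotheses (e_sym : symmetric e) (e_irr : irreflexive e).

Local Notation N x := [set y | e x y].

Lemma triangle_of_cycle3 : has_cycle e 3 -> exists x1 x2 x3, [/\ e x1 x2, e x2 x3 & e x3 x1].
Proof.
case=> _ [s [size_s _ cyc_s]].
case: s size_s cyc_s => [|x1 [|x2 [|x3 [|? ?]]]] //= _ /and4P[e12 e23 e31 _].
by exists x1, x2, x3.
Qed.

Lemma tri_free_of_no_cycle3 : ~ has_cycle e 3 -> forall x u z, e x u -> e u z -> e x z = false.
Proof.
move=> no_cyc x u z xu uz; apply/negP => xz; apply: no_cyc; split=> //.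
exists [:: x; u; z]; split=> //=; last by rewrite xu uz e_sym xz.
by rewrite !inE negb_or !(adj_neq e_irr) // e_sym.
Qed.

(* Opposite vertices of a 4-cycle have two common neighbours. *)
Lemma two_arc_of_cycle4 : has_cycle e 4 ->
  exists x u z, two_arc e x u z /\ 1 < #|N x :&: N z|.
Proof.
case=> _ [s [size_s uniq_s cyc_s]].
case: s size_s uniq_s cyc_s => [|p0 [|p1 [|p2 [|p3 [|? ?]]]]] //= _ uniq_p.
case/and5P=> e01 e12 e23 e30 _; change (is_true (uniq [:: p0; p1; p2; p3])) in uniq_p.
move: uniq_p; rewrite uniq4E => /and4P[_ p02 _ /and3P[_ p13 _]].
exists p0, p1, p2; split; first by split; rewrite // e_sym.
by apply/card_gt1P; exists p1, p3; rewrite !inE e01 (e_sym p2) e12 e23 (e_sym p0) e30.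
Qed.

End Cycles.

Lemma girth4_classification (T : finType) (e : rel T) :
  symmetric e -> irreflexive e -> gconnected e -> regular e 4 -> two_arc_transitive e ->
  (forall x u z, e x u -> e u z -> e x z = false) -> has_cycle e 4 ->
  [\/ isomorphic e (edge_rel 8 EK44), isomorphic e (edge_rel 10 EK55m),
      isomorphic e (edge_rel 16 EQ4) | isomorphic e (edge_rel 14 EBCH)].
Proof.
move=> e_sym e_irr e_conn e_reg e_2at e_tri_free /(two_arc_of_cycle4 e_sym)[x [u [z [xuz c_gt1]]]].
set c := #|_ :&: _| in c_gt1.
have card_common x' u' z' : two_arc e x' u' z' -> #|[set y | e x' y] :&: [set y | e z' y]| = c.
  by move=> arc; rewrite (card_common_nbrs_two_arc e_2at xuz arc).
have c_le4 : c <= 4 by rewrite -(e_reg x) subset_leq_card // subsetIl.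
have [a [a_inj a_adj a_onto]] := nbr_labelling e_reg x.
clearbody c; have [c2 | c3 | c4] : [\/ c = 2, c = 3 | c = 4].
  by move: c c_gt1 c_le4 {card_common} => [|[|[|[|[|n]]]]] //= _ _;
    [constructor 1 | constructor 2 | constructor 3].
- have := Q4_or_BCH_of_c2 e_sym e_irr e_reg e_conn e_tri_free card_common a_inj a_adj c2 a_onto.
  by case=> iso; [constructor 3 | constructor 4].
- constructor 2.
  exact: (K55m_of_c3 e_sym e_irr e_reg e_conn e_tri_free card_common a_inj a_adj c3 a_onto).
- by constructor 1; apply: (K44_of_c4 e_sym e_irr e_reg e_conn card_common a_inj a_adj c4).
Qed.

Theorem lemma4p1 (T : finType) (e : rel T)
  (e_sym : symmetric e) (e_irr : irreflexive e)
  (e_conn : gconnected e) (e_val : regular e 4)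
  (e_2at : two_arc_transitive e)
  (e_girth : exists g, girth e g /\ g <= 4) :
  (girth e 3 /\ isomorphic e K5_rel)
  \/ (girth e 4 /\ isomorphic e K44_rel /\ isomorphic e C41_rel)
  \/ (girth e 4 /\ (isomorphic e K55m_rel \/ isomorphic e Q4_rel
                    \/ isomorphic e BCH_rel)).
Proof.
have [g [[[g_ge3 cyc_g] g_min] g_le4]] := e_girth.
have [g3 | g4] : g = 3 \/ g = 4.
  by move: g_ge3 g_le4; case: (g) => [|[|[|[|[|]]]]] //= _ _; [left | right].
- subst g; left; split; first by split=> //; split.
  have [x1 [x2 [x3 [e12 e23 e31]]]] := triangle_of_cycle3 (conj g_ge3 cyc_g).
  exact: isomorphic_trans (K5_of_triangle e_sym e_irr e_2at e_conn e_val e12 e23 e31) edge_rel_K5.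
- subst g; right; have girth4 : girth e 4 by split=> //; split.
  have e_tri_free := tri_free_of_no_cycle3 e_sym e_irr (g_min 3 isT).
  case: (girth4_classification e_sym e_irr e_conn e_val e_2at e_tri_free (conj g_ge3 cyc_g)).
  + by left; split=> //; split;
      [apply: isomorphic_trans edge_rel_K44 | apply: isomorphic_trans edge_rel_C41].
  + by right; split=> //; left; apply: isomorphic_trans edge_rel_K55m.
  + by right; split=> //; right; left; apply: isomorphic_trans edge_rel_Q4.
  + by right; split=> //; right; right; apply: isomorphic_trans edge_rel_BCH.
Qed.
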